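(* Let $0<f_1<f_2<f_3$ and $2h=1$. For values $(f_L,g_L)$ with $f_L<1$ in the image of the reduced Lamé momentum map $(F_L,G_L):M_h\to\mathbb R^2$, set $r_2=g_L/(1-f_L)$ and define $$p_1(s)^2=\frac{f_L-s}{4(s-1)^2s},\qquad p_k(s)^2=-\frac{(f_L-1)s+g_L}{4(f_3-s)(s-f_1)(s-f_2)}\ (k=2,3),$$ $$J_1=\frac2\pi\int_0^{f_L}p_1\,ds,\quad J_2=\frac2\pi\int_{f_1}^{\min(r_2,f_2)}p_2\,ds,\quad J_3=\frac2\pi\int_{\max(f_2,r_2)}^{f_3}p_3\,ds.$$ Then for each fixed $r_2$, the points of the image of the momentum map lying on the straight line $F_L=1-\frac{1}{r_2}G_L$ are mapped by $(J_1,J_2,J_3)$ into a straight line in action space $\mathbb R^3$.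
   Context: $\mathbf L=(\ell_{12},\ell_{13},\ell_{14},\ell_{23},\ell_{24},\ell_{34})\in\mathbb R^6$; $M_h=\{\mathbf L:\sum_{i<j}\ell_{ij}^2=2h,\ \ell_{12}\ell_{34}-\ell_{13}\ell_{24}+\ell_{14}\ell_{23}=0\}\cong S^2\times S^2$ is a symplectic leaf of $\mathfrak{so}(4)^*$ (Lie–Poisson bracket). The reduced Lamé system is $F_L=\ell_{12}^2+\ell_{13}^2+\ell_{14}^2$, $G_L=f_1\ell_{34}^2+f_2\ell_{24}^2+f_3\ell_{23}^2$. The $J_i$ are its (continuous) action variables, obtained from separation of the geodesic flow on $S^3$ in Lamé coordinates; the radicands are nonnegative on the integration intervals. *)

From mathcomp Require Import all_boot all_order all_algebra.
From mathcomp Require Import all_classical all_reals all_analysis.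
Set Implicit Arguments. Unset Strict Implicit. Unset Printing Implicit Defensive.
Import Order.TTheory GRing.Theory Num.Theory.
Import numFieldNormedType.Exports.
Local Open Scope classical_set_scope.
Local Open Scope ring_scope.

Section Lame.
Variable R : realType.

(* The symplectic leaf M_h of so(4)^*, coordinates (l12,l13,l14,l23,l24,l34). *)
Definition in_Mh (h l12 l13 l14 l23 l24 l34 : R) : Prop :=
  l12 ^+ 2 + l13 ^+ 2 + l14 ^+ 2 + l23 ^+ 2 + l24 ^+ 2 + l34 ^+ 2 = 2 * h /\
  l12 * l34 - l13 * l24 + l14 * l23 = 0.

Definition F_L (l12 l13 l14 : R) : R := l12 ^+ 2 + l13 ^+ 2 + l14 ^+ 2.
Definition G_L (f1 f2 f3 l23 l24 l34 : R) : R :=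
  f1 * l34 ^+ 2 + f2 * l24 ^+ 2 + f3 * l23 ^+ 2.

Definition in_momentum_image (h f1 f2 f3 fL gL : R) : Prop :=
  exists l12 l13 l14 l23 l24 l34 : R,
    in_Mh h l12 l13 l14 l23 l24 l34 /\
    F_L l12 l13 l14 = fL /\ G_L f1 f2 f3 l23 l24 l34 = gL.

Definition r2_of (fL gL : R) : R := gL / (1 - fL).

Definition p1 (fL s : R) : R :=
  Num.sqrt ((fL - s) / (4 * (s - 1) ^+ 2 * s)).

Definition p23 (f1 f2 f3 fL gL s : R) : R :=
  Num.sqrt (- ((fL - 1) * s + gL) / (4 * (f3 - s) * (s - f1) * (s - f2))).

(* Action variables; integrals are Lebesgue integrals over the closed
   intervals (possibly improper as Riemann integrals: integrable singularities
   at the endpoints). *)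
Definition J1 (fL : R) : R :=
  2 / pi * Rintegral (@lebesgue_measure R) `[0, fL] (p1 fL).

Definition J2 (f1 f2 f3 fL gL : R) : R :=
  2 / pi * Rintegral (@lebesgue_measure R)
    `[f1, Num.min (r2_of fL gL) f2] (p23 f1 f2 f3 fL gL).

Definition J3 (f1 f2 f3 fL gL : R) : R :=
  2 / pi * Rintegral (@lebesgue_measure R)
    `[Num.max f2 (r2_of fL gL), f3] (p23 f1 f2 f3 fL gL).

End Lame.

From mathcomp Require Import all_boot all_order all_algebra.
From mathcomp Require Import all_classical all_reals all_analysis.
From mathcomp Require Import measurable_realfun.
From mathcomp Require Import ring.
Import Order.TTheory GRing.Theory Num.Theory.
Import numFieldNormedType.Exports.
Local Open Scope classical_set_scope.
Local Open Scope ring_scope.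

(* On the line g_L = r_2 (1 - f_L) the radicand of p_2 = p_3 factors as
   (1 - f_L) (s - r_2) / (4 (f_3 - s) (s - f_1) (s - f_2)), so J_2 and J_3 are
   sqrt(1 - f_L) times integrals that depend on r_2 only.  The action J_1 does
   not involve g_L and has the closed form 1 - sqrt(1 - f_L).  Hence
   (J_1, J_2, J_3) is affine in t = sqrt(1 - f_L) along the line.
   The integrand p_1 is singular at s = 0: J_1 is computed on [e, f_L] by the
   fundamental theorem of calculus and the limit e -> 0 is taken by monotone
   convergence. *)

Lemma measurable_inv (R : realType) : measurable_fun setT (@GRing.inv R).
Proof.
rewrite -(setUv [set 0]); apply/measurable_funU; [exact: measurable_set1| |].
  by apply: measurableC; exact: measurable_set1.
split; first exact: measurable_fun_set1.
apply: open_continuous_measurable_fun.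
  apply: closed_openC; apply: accessible_closed_set1.
  exact: hausdorff_accessible.
by move=> x; rewrite inE /= => /eqP x0; exact: inv_continuous.
Qed.

Lemma measurable_sqrt (R : realType) : measurable_fun setT (@Num.sqrt R).
Proof. exact: continuous_measurable_fun (@sqrt_continuous R). Qed.

(* Unlike RintegralZl, no integrability is needed: a nonnegative integral is
   finite or +oo, and fine (+oo) = 0 on both sides. *)
Lemma ge0_RintegralZl d (T : measurableType d) (R : realType) (mu : measure T R)
    (D : set T) (f : T -> R) (c : R) :
  measurable D -> measurable_fun D f -> (forall x, D x -> 0 <= f x) -> 0 <= c ->
  Rintegral mu D (fun x => c * f x) = c * Rintegral mu D f.
Proof.
move=> mD mf f0 c0; rewrite /Rintegral.
have fE0 x : D x -> (0 <= (f x)%:E)%E by move=> Dx; rewrite lee_fin f0.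
have mfE : measurable_fun D (EFin \o f) by exact/measurable_EFinP.
under eq_integral do rewrite EFinM.
rewrite (ge0_integralZl_EFin _ mD fE0 mfE c0).
have [->|c_neq0] := eqVneq c 0; first by rewrite mul0e mul0r.
have c_gt0 : 0 < c by rewrite lt_neqAle eq_sym c_neq0.
case: (\int[mu]_(x in D) (f x)%:E)%E => [r| |].
- by rewrite -EFinM.
- by rewrite mulry gtr0_sg // mul1e mulr0.
- by rewrite mulrNy gtr0_sg // mul1e mulr0.
Qed.

Lemma ge0_integral_itv_cc_lim (R : realType) (f : R -> R) (a b : R)
    (e : nat -> R) (l : \bar R) :
  measurable_fun `]a, b] f -> (forall x, a < x <= b -> 0 <= f x) ->
  {homo e : n m / (n <= m)%N >-> m <= n} -> (forall n, a < e n) ->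
  e n @[n --> \oo] --> a ->
  (\int[lebesgue_measure]_(x in `[e n, b]) (f x)%:E)%E @[n --> \oo] --> l ->
  (\int[lebesgue_measure]_(x in `[a, b]) (f x)%:E)%E = l.
Proof.
move=> mf f0 e_noninc a_lt_e e_a If_l.
pose D : set R := `]a, b]%classic.
have mD : measurable D by exact: measurable_itv.
have eD n : `[e n, b] `<=` D by apply: subset_itvr; rewrite bnd_simp a_lt_e.
have fD0 x : D x -> 0 <= f x by rewrite /D /= in_itv /=; exact: f0.
pose g n := (EFin \o f) \_ `[e n, b].
have mg n : measurable_fun D (g n).
  apply/measurable_restrict => //.
  by apply/measurable_EFinP; apply: (measurable_funS mD) mf; exact: subIsetl.
have g0 n x : D x -> (0 <= g n x)%E.
  by move=> Dx; rewrite /g patchE; case: ifP => // _; rewrite lee_fin fD0.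
have g_nd x : D x -> {homo g ^~ x : n m / (n <= m)%N >-> (n <= m)%E}.
  move=> Dx n m nm; rewrite /g !patchE; case: ifPn => [/set_mem xn|_].
    by rewrite mem_set //; apply: subset_itvr xn; rewrite bnd_simp e_noninc.
  by case: ifP => // _; rewrite lee_fin fD0.
have g_lim x : D x -> limn (g ^~ x) = (f x)%:E.
  rewrite /D /= in_itv /= => /andP[ax xb]; apply: lim_near_cst => //.
  near=> n; rewrite /g patchE mem_set //= in_itv /= xb andbT ltW //.
  by near: n; exact: cvgr_lt e_a _ ax.
have Ig n : (\int[lebesgue_measure]_(x in D) g n x =
             \int[lebesgue_measure]_(x in `[e n, b]) (f x)%:E)%E.
  by rewrite -integral_mkcondr setIidr.
rewrite -integral_itv_obnd_cbnd; last exact/measurable_EFinP.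
have Ilim : (\int[lebesgue_measure]_(x in D) limn (g ^~ x) =
             \int[lebesgue_measure]_(x in D) (f x)%:E)%E.
  by apply: eq_integral => x /set_mem /g_lim.
have := @cvg_monotone_convergence _ _ _ lebesgue_measure _ mD g mg g0 g_nd.
rewrite Ilim; under eq_fun do rewrite Ig.
by move=> If_lim; exact: cvg_unique If_lim If_l.
Unshelve. all: by end_near.
Qed.

Lemma cvgn_natS (R : realType) : (n.+1%:R : R) @[n --> \oo] --> +oo.
Proof. by have := @cvgr_idn R; rewrite -cvg_shiftS. Qed.

Lemma cvgn_atanZ (R : realType) (c : R) : 0 < c ->
  atan (c * n.+1%:R) @[n --> \oo] --> pi / 2.
Proof.
move=> c_gt0.
have cx_y : c * x @[x --> +oo] --> +oo.
  apply/cvgryPge => M; apply: filterS (nbhs_pinfty_ge (num_real (c^-1 * M))) => x.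
  by rewrite ler_pdivrMl.
have := cvg_comp _ _ (cvgn_natS R) (cvg_comp _ _ cx_y (@cvgy_atan R)).
exact.
Qed.

Lemma measurable_p1 (R : realType) (a : R) : measurable_fun setT (p1 a).
Proof.
apply: measurableT_comp; first exact: measurable_sqrt.
apply: measurable_funM; first exact: measurable_funB.
apply: measurableT_comp; first exact: measurable_inv.
apply: measurable_funM => //; apply: measurable_funM => //.
by apply: measurable_funX; exact: measurable_funB.
Qed.

Section J1_closed_form.
Context {R : realType} (a : R).
Hypotheses (a_gt0 : 0 < a) (a_lt1 : a < 1).

Let b := Num.sqrt (1 - a).

Let b_gt0 : 0 < b. Proof. by rewrite sqrtr_gt0 subr_gt0. Qed.

Definition p1_arg (s : R) : R := Num.sqrt (a / s - 1).

(* With u = p1_arg s, i.e. s = a / (1 + u^2), one gets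
   p1 ds = - (1 / (1 + u^2) - b^2 / (b^2 + u^2)) du. *)
Definition p1_primitive (s : R) : R :=
  - atan (p1_arg s) + b * atan (b^-1 * p1_arg s).

Lemma p1_arg_gt0 : {in `]0, a[, forall s, 0 < p1_arg s}.
Proof.
move=> s; rewrite in_itv /= => /andP[s_gt0 s_lt_a].
by rewrite sqrtr_gt0 subr_gt0 ltr_pdivlMr // mul1r.
Qed.

Lemma sqr_p1_arg : {in `]0, a[, forall s, p1_arg s ^+ 2 = a / s - 1}.
Proof.
move=> s; rewrite in_itv /= => /andP[s_gt0 s_lt_a].
by rewrite sqr_sqrtr // subr_ge0 ler_pdivlMr // mul1r ltW.
Qed.

Lemma continuous_p1_arg s : s != 0 -> {for s, continuous p1_arg}.
Proof.
move=> s0; apply: continuous_comp; last exact: sqrt_continuous.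
apply/differentiable_continuous/derivable1_diffP.
by apply: derivableB => //; apply: derivableM => //; exact: derivableV.
Qed.

Lemma continuous_p1_primitive s : s != 0 -> {for s, continuous p1_primitive}.
Proof.
move=> s0.
have atan_u := continuous_comp (continuous_p1_arg _ s0) (@continuous_atan R _).
apply: continuousD; first exact: continuousN atan_u.
apply: continuousM; first exact: cst_continuous.
have := continuous_comp
  (continuousM (@cst_continuous _ _ b^-1 s) (continuous_p1_arg _ s0))
  (@continuous_atan R _).
exact.
Qed.

Lemma continuous_p1 s : s != 0 -> s != 1 -> {for s, continuous (p1 a)}.
Proof.
move=> s0 s1; apply: continuous_comp; last exact: sqrt_continuous.
apply/differentiable_continuous/derivable1_diffP.
apply: derivableM; first exact: derivableB.
apply: derivableV; last exact: derivableM.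
by rewrite !mulf_eq0 !negb_or subr_eq0 s0 s1 pnatr_eq0.
Qed.

Lemma is_derive_p1_arg :
  {in `]0, a[, forall s : R,
    is_derive s 1 p1_arg ((2 * p1_arg s)^-1 * (- a / s ^+ 2))}.
Proof.
move=> s; rewrite in_itv /= => /andP[s_gt0 s_lt_a].
have w_gt0 : 0 < a / s - 1 by rewrite subr_gt0 ltr_pdivlMr // mul1r.
have dw : is_derive s 1 (fun y => a / y - 1) (- a / s ^+ 2).
  have dinv : is_derive s 1 (fun y : R => y^-1) (- s ^- 2 *: 1).
    by apply: is_deriveV; rewrite gt_eqF.
  have dw : is_derive s 1 (fun y => a / y - 1) (a *: (- s ^- 2 *: 1) - 0) :=
    is_deriveB (is_deriveZ a dinv) (@is_derive_cst R R R 1 s 1).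
  apply: is_derive_eq dw _; change (a * (- s ^- 2 * 1) - 0 = - a / s ^+ 2).
  by rewrite subr0 mulr1 mulrN mulNr.
exact: (@is_derive1_comp R Num.sqrt (fun y => a / y - 1) s _ _
  (is_derive1_sqrt w_gt0) dw).
Qed.

Lemma p1E :
  {in `]0, a[, forall s, p1 a s = p1_arg s ^+ 2 / (2 * p1_arg s * (1 - s))}.
Proof.
move=> s s_in; have u_gt0 := p1_arg_gt0 _ s_in; have u2 := sqr_p1_arg _ s_in.
move: s_in; rewrite in_itv /= => /andP[s_gt0 s_lt_a].
have s_lt1 : 0 < 1 - s by rewrite subr_gt0 (lt_trans s_lt_a).
rewrite /p1 (_ : (a - s) / (4 * (s - 1) ^+ 2 * s) =
                 p1_arg s ^+ 2 * ((2 * (1 - s))^-1) ^+ 2).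
  rewrite sqrtrM ?sqr_ge0 // !sqrtr_sqr !ger0_norm ?invr_ge0 ?mulr_ge0 ?ltW //.
  by field; rewrite !gt_eqF.
by rewrite u2; field; rewrite -[s - 1]opprB oppr_eq0 !gt_eqF.
Qed.

Lemma is_derive_p1_primitive :
  {in `]0, a[, forall s : R, is_derive s 1 p1_primitive (p1 a s)}.
Proof.
move=> s s_in; have := s_in; rewrite in_itv /= => /andP[s_gt0 s_lt_a].
have du := is_derive_p1_arg _ s_in.
have := is_deriveD (is_deriveN (is_derive1_comp (is_derive1_atan _) du))
  (is_deriveZ b (is_derive1_comp (is_derive1_atan _) (is_deriveZ b^-1 du))).
move=> /is_derive_eq; apply; rewrite p1E //=.
have u_gt0 := p1_arg_gt0 _ s_in; have u2 := sqr_p1_arg _ s_in.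
set u := p1_arg s in u_gt0 u2 *.
have b2 : b ^+ 2 = 1 - a by rewrite sqr_sqrtr // subr_ge0 ltW.
have s_lt1 : s < 1 by rewrite (lt_trans s_lt_a).
(* the denominators in the shape [field] normalises them to *)
have e1 : (1 - a) * s + (a + -1 * s) = a * (1 - s) by ring.
have e2 : s + (a + -1 * s) = a by ring.
rewrite exprMn exprVn u2 b2 /GRing.scale /=.
by field; rewrite e1 e2 mulf_neq0 !gt_eqF ?subr_gt0.
Qed.

Lemma p1_primitive_a : p1_primitive a = 0.
Proof.
rewrite /p1_primitive /p1_arg divff ?gt_eqF // subrr sqrtr0.
by rewrite mulr0 atan0 mulr0 oppr0 addr0.
Qed.

Lemma integral_p1_from e : 0 < e < a ->
  (\int[lebesgue_measure]_(x in `[e, a]) (p1 a x)%:E = (- p1_primitive e)%:E)%E.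
Proof.
case/andP=> e_gt0 e_lt_a.
have sub_e x : x \in `]e, a[ -> x \in `]0, a[.
  by rewrite !in_itv /= => /andP[ex ->]; rewrite andbT (lt_trans e_gt0).
rewrite (@continuous_FTC2 _ _ p1_primitive _ _ e_lt_a).
  by rewrite p1_primitive_a sub0e.
- apply: continuous_in_subspaceT => x; rewrite inE /= in_itv /= => /andP[ex xa].
  apply: continuous_p1; first by rewrite gt_eqF ?(lt_le_trans e_gt0).
  by rewrite lt_eqF ?(le_lt_trans xa).
- split.
  + move=> x /sub_e /is_derive_p1_primitive dK.
    exact: (@ex_derive _ _ _ _ _ _ _ dK).
  + by apply: cvg_at_right_filter; apply: continuous_p1_primitive; rewrite gt_eqF.
  + by apply: cvg_at_left_filter; apply: continuous_p1_primitive; rewrite gt_eqF.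
- move=> x /sub_e /is_derive_p1_primitive dK.
  by rewrite derive1E; exact: (@derive_val _ _ _ _ _ _ _ dK).
Qed.

Let e n := a / (1 + n.+1%:R ^+ 2).

Let e_gt0 n : 0 < e n.
Proof. by rewrite divr_gt0 // ltr_wpDr ?sqr_ge0. Qed.

Let e_lt_a n : e n < a.
Proof.
have X_gt1 : 1 < 1 + n.+1%:R ^+ 2 :> R by rewrite ltrDl exprn_gt0.
by rewrite ltr_pdivrMr ?ltr_pMr // (lt_trans ltr01).
Qed.

Let e_noninc : {homo e : n m / (n <= m)%N >-> m <= n}.
Proof.
move=> n m nm; rewrite ler_pM2l // lef_pV2 ?posrE ?ltr_wpDr ?sqr_ge0 //.
by rewrite lerD2l lerXn2r ?nnegrE ?ler0n // ler_nat ltnS.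
Qed.

Let cvg_e : e n @[n --> \oo] --> 0.
Proof.
rewrite -(mulr0 a); apply: cvgM; first exact: cvg_cst.
apply/gtr0_cvgV0; first by near=> n; rewrite ltr_wpDr ?sqr_ge0.
apply/cvgryPge => M; have /cvgryPge/(_ M) := cvgn_natS R.
apply: filterS => n /le_trans; apply.
rewrite -[leLHS]mul1r -[leLHS]add0r lerD // expr2 ler_wpM2r // ler1n.
Unshelve. all: by end_near.
Qed.

Let p1_arg_e n : p1_arg (e n) = n.+1%:R.
Proof.
rewrite /p1_arg /e invf_div mulrCA divff ?gt_eqF // mulr1 [1 + _]addrC addrK.
by rewrite sqrtr_sqr ger0_norm.
Qed.

Let cvg_p1_primitive_e : - p1_primitive (e n) @[n --> \oo] --> pi / 2 * (1 - b).
Proof.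
have -> : (fun n => - p1_primitive (e n)) =
          (fun n => atan (1 * n.+1%:R) - b * atan (b^-1 * n.+1%:R)).
  by apply/funext => n; rewrite /p1_primitive p1_arg_e mul1r opprD opprK.
rewrite mulrBr mulr1 [_ * b]mulrC; apply: cvgB; first exact: cvgn_atanZ.
by apply: cvgM; [exact: cvg_cst | apply: cvgn_atanZ; rewrite invr_gt0].
Qed.

Lemma integral_p1 :
  (\int[lebesgue_measure]_(x in `[0%R, a]) (p1 a x)%:E)%E = (pi / 2 * (1 - b))%:E.
Proof.
apply: (@ge0_integral_itv_cc_lim _ _ _ _ e _ _ _ e_noninc e_gt0).
- apply: (measurable_funS measurableT) => //; exact: measurable_p1.
- by move=> x _; exact: sqrtr_ge0.
- exact: cvg_e.
- under eq_fun do rewrite integral_p1_from ?e_gt0 ?e_lt_a //.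
  by apply: cvg_EFin; [exact: nearW | exact: cvg_p1_primitive_e].
Qed.

End J1_closed_form.

Lemma J1E (R : realType) (fL : R) :
  0 <= fL -> fL < 1 -> J1 fL = 1 - Num.sqrt (1 - fL).
Proof.
rewrite le_eqVlt => /predU1P[<- _|fL_gt0 fL_lt1].
  by rewrite /J1 set_itv1 Rintegral_set1 mulr0 subr0 sqrtr1 subrr.
rewrite /J1 /Rintegral integral_p1 //= mulrA -[pi / 2]invf_div mulfV ?mul1r //.
by rewrite mulf_neq0 ?invr_eq0 ?gt_eqF ?pi_gt0.
Qed.

Section J23_on_a_line.
Context {R : realType} (f1 f2 f3 : R).

Definition q23 (r2 s : R) : R :=
  Num.sqrt ((s - r2) / (4 * (f3 - s) * (s - f1) * (s - f2))).

Definition J2_slope (r2 : R) : R :=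
  2 / pi * Rintegral lebesgue_measure `[f1, Num.min r2 f2] (q23 r2).

Definition J3_slope (r2 : R) : R :=
  2 / pi * Rintegral lebesgue_measure `[Num.max f2 r2, f3] (q23 r2).

Lemma measurable_q23 r2 : measurable_fun setT (q23 r2).
Proof.
apply: measurableT_comp; first exact: measurable_sqrt.
apply: measurable_funM; first exact: measurable_funB.
apply: measurableT_comp; first exact: measurable_inv.
do 2 (apply: measurable_funM; last exact: measurable_funB).
by apply: measurable_funM => //; exact: measurable_funB.
Qed.

Lemma p23E fL gL : fL < 1 ->
  p23 f1 f2 f3 fL gL = fun s => Num.sqrt (1 - fL) * q23 (r2_of fL gL) s.
Proof.
move=> fL_lt1; apply/funext => s.
have fL_neq1 : 1 - fL != 0 by rewrite subr_eq0 gt_eqF.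
rewrite /p23 /q23 /r2_of -sqrtrM ?subr_ge0 ?ltW //; congr Num.sqrt.
by rewrite mulrA; congr (_ * _); field.
Qed.

Lemma Rintegral_p23 fL gL (D : set R) : measurable D -> fL < 1 ->
  Rintegral lebesgue_measure D (p23 f1 f2 f3 fL gL) =
  Num.sqrt (1 - fL) * Rintegral lebesgue_measure D (q23 (r2_of fL gL)).
Proof.
move=> mD fL_lt1; rewrite p23E // ge0_RintegralZl ?sqrtr_ge0 //.
- exact: measurable_funS (measurable_q23 _).
- by move=> x _; exact: sqrtr_ge0.
Qed.

Lemma J2E fL gL : fL < 1 ->
  J2 f1 f2 f3 fL gL = Num.sqrt (1 - fL) * J2_slope (r2_of fL gL).
Proof. by move=> fL_lt1; rewrite /J2 Rintegral_p23 // mulrCA. Qed.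

Lemma J3E fL gL : fL < 1 ->
  J3 f1 f2 f3 fL gL = Num.sqrt (1 - fL) * J3_slope (r2_of fL gL).
Proof. by move=> fL_lt1; rewrite /J3 Rintegral_p23 // mulrCA. Qed.

End J23_on_a_line.

Lemma F_L_ge0 (R : realType) (l12 l13 l14 : R) : 0 <= F_L l12 l13 l14.
Proof. by rewrite /F_L !addr_ge0 ?sqr_ge0. Qed.

Theorem lemma14 (R : realType) (f1 f2 f3 h : R) :
  0 < f1 -> f1 < f2 -> f2 < f3 -> 2 * h = 1 ->
  forall r2 : R,
  exists (P1 P2 P3 D1 D2 D3 : R),
    (D1 != 0 \/ D2 != 0 \/ D3 != 0) /\
    forall fL gL : R,
      in_momentum_image h f1 f2 f3 fL gL -> fL < 1 ->
      r2_of fL gL = r2 ->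
      fL = 1 - gL / r2 ->
      exists t : R,
        J1 fL = P1 + t * D1 /\
        J2 f1 f2 f3 fL gL = P2 + t * D2 /\
        J3 f1 f2 f3 fL gL = P3 + t * D3.
Proof.
move=> _ _ _ _ r2.
exists 1, 0, 0, (-1), (J2_slope f1 f2 f3 r2), (J3_slope f1 f2 f3 r2).
split; first by left; rewrite oppr_eq0 oner_eq0.
move=> fL gL [l12 [l13 [l14 [_ [_ [_ [_ [<- _]]]]]]]] fL_lt1 <- _.
exists (Num.sqrt (1 - F_L l12 l13 l14)); rewrite !add0r.
by rewrite J1E ?F_L_ge0 // J2E // J3E // mulrN1.
Qed.
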